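(* If $\mathsf{A},\mathsf{B},\mathsf{C}\in\mathbb{S}$ with $\mathsf{B},\mathsf{C}\neq\mathsf{0}$, then $\exp\big(\mathsf{A}+\mathsf{B}*\exp(\mathsf{C})\big)\le\exp\big((\mathsf{A}+\mathsf{B})*\exp(\mathsf{C})\big)$.
   Context: Standard generating sets: $\mathrm{Homeo}_+(I)$ acts on $I=[0,1]$ on the right. Support $\mathrm{supt}(f)=\{t:tf\ne t\}$; extended support = interior of its closure; orbitals = components of the support, endpoints = transition points; a bump has exactly one orbital, positive if $tf>t$ there, else negative. A marking assigns to each bump $b$ with support $(u,v)$ a point $s_b\in(u,v)$; feet of $b$: $(u,s_b)$ and $[t_b,v)$ with $t_b=s_bb$ ($b$ positive) or $s_bb^{-1}$ ($b$ negative). A marked function has finitely many bumps, each marked. A finite set of marked functions is fast if no bump occurs in two of its elements and distinct bumps have disjoint feet. A standard function is a marked function whose extended support is an interval, with all positive bumps right of all negative bumps, and #positive $-$ #negative bumps $\in\{0,1\}$. For standard $f,g$: $f\ll g$ iff extended supports disjoint with $f$'s to the left; $f\sqsubset g$ iff closure of extended support of $f$ lies in extended support of $g$; $f<g$ iff $f\ll g$ or $f\sqsubset g$. $f^\circ$: if $f$ has $>2$ orbitals, $f$ restricted to the union of its non-extreme orbitals; if $f$ has 1 or 2 orbitals and the left foot of its positive bump is $(r,s)$, a positive bump with support $(r,s)$. $(f,g)$ is a standard pair if $\{f,g\}$ is fast and either $f\ll g$ or ($f\sqsubset g$ and $(g^\circ,f)$ is a standard pair). $\mathcal{S}$ = finite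 sets of standard functions, pairwise $<$-comparable, each pair $f<g$ a standard pair. Oscillation $o(f,g)$ for $f<g$: number of orbitals of $g$ containing a transition point of $f$. Signatures: the signature of $A\in\mathcal S$ is $(f,g)\mapsto o(f,g)$ on pairs $f<g$; functions on pairs of finite linear orders are equivalent if an order-preserving bijection of bases carries one to the other; $\mathbb{S}$ = signatures of members of $\mathcal S$ up to equivalence. $\mathsf{0}$: empty base. $\mathsf{A}+\mathsf{B}$: base $A$ followed by $B$, agreeing with $\mathsf{A},\mathsf{B}$ on their bases, value $0$ across. $\exp(\mathsf{A})$: same base, values $\mathsf{A}(i,j)+1$. $\mathsf{A}*\exp(\mathsf{C})$: base $A$ followed by $C$, agreeing with $\mathsf{A}$ on $A$, with $\exp(\mathsf{C})$ on $C$, value $1$ across. Inflation: for $\mathsf{A}$ with base $A$ and $m\in A$, $\mathsf{A}^m$ has base $A\cup\{i^m:i<m,\ \mathsf{A}(i,m)>0\}$, new elements placed above all elements of $A$ below $m$ and below $m$, $i^m<j^m$ iff $i<j$; for $i,j<m\le k$ (with $\mathsf{A}(m,m)=\infty$): $\mathsf{A}^m(i^m,j^m)=\mathsf{A}(i,j)$, $\mathsf{A}^m(i,j^m)=\min(\mathsf{A}(j,m)-1,\mathsf{A}(i,m))$, $\mathsf{A}^m(i^m,k)=\min(\mathsf{A}(i,m),\mathsf{A}(m,k))$, other values as in $\mathsf{A}$. $\mathsf{A}\le\mathsf{B}$ iff there is a sequence $\mathsf{B}_0=\mathsf{B},\dots,\mathsf{B}_n=\mathsf{A}$ with each $\mathsf{B}_{i+1}$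 (equivalent to) a restriction to a subset of the base of an inflation of $\mathsf{B}_i$. *)

From Stdlib Require Import Reals List Arith Permutation.
Import ListNotations.

Set Implicit Arguments.

Open Scope R_scope.

Definition inI (x : R) : Prop := 0 <= x <= 1.

(* f : R -> R, only its restriction to I = [0,1] matters; t f = f t. *)
Definition homeo_plus (f : R -> R) : Prop :=
  f 0 = 0 /\ f 1 = 1 /\
  (forall x y, inI x -> inI y -> x < y -> f x < f y) /\
  (forall x, inI x -> forall eps, 0 < eps -> exists delta, 0 < delta /\
     forall y, inI y -> Rabs (y - x) < delta -> Rabs (f y - f x) < eps).

Definition support (f : R -> R) (t : R) : Prop := inI t /\ f t <> t.

Definition closure (S : R -> Prop) (x : R) : Prop :=
  forall eps, 0 < eps -> exists y, S y /\ Rabs (x - y) < eps.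

Definition interior (S : R -> Prop) (x : R) : Prop :=
  exists eps, 0 < eps /\ forall y, Rabs (y - x) < eps -> S y.

Definition ext_supp (f : R -> R) : R -> Prop := interior (closure (support f)).

Definition is_orbital (f : R -> R) (u v : R) : Prop :=
  0 <= u /\ u < v /\ v <= 1 /\ f u = u /\ f v = v /\
  forall t, u < t < v -> f t <> t.

Definition pos_on (f : R -> R) (u v : R) : Prop := forall t, u < t < v -> t < f t.
Definition neg_on (f : R -> R) (u v : R) : Prop := forall t, u < t < v -> f t < t.

(* A marked function: f together with its list of bumps (u,v,s_b):
   one entry per orbital (u,v) of f, with marking s_b in (u,v). *)
Record MF := mkMF { mf_f : R -> R; mf_m : list (R * R * R) }.

Definition mf_id : MF := mkMF (fun x => x) [].

Definition marked (F : MF) : Prop :=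
  homeo_plus (mf_f F) /\
  (forall u v s, In (u, v, s) (mf_m F) -> is_orbital (mf_f F) u v /\ u < s < v) /\
  (forall u v, is_orbital (mf_f F) u v -> exists s, In (u, v, s) (mf_m F)) /\
  NoDup (map (fun b : R * R * R => let '(u, v, _) := b in (u, v)) (mf_m F)).

Definition lfoot (u s : R) (x : R) : Prop := u < x < s.
Definition rfoot (f : R -> R) (u v s : R) (x : R) : Prop :=
  (pos_on f u v /\ f s <= x < v) \/
  (neg_on f u v /\ exists t, u < t < v /\ f t = s /\ t <= x < v).

Definition disjoint (A B : R -> Prop) : Prop := forall x, ~ (A x /\ B x).

Definition same_bump (f : R -> R) (u v : R) (g : R -> R) (u' v' : R) : Prop :=
  u = u' /\ v = v' /\ forall t, u < t < v -> f t = g t.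

Definition fast (L : list MF) : Prop :=
  (forall i j, (i < length L)%nat -> (j < length L)%nat -> i <> j ->
     forall u v s u' v' s',
       In (u, v, s) (mf_m (nth i L mf_id)) -> In (u', v', s') (mf_m (nth j L mf_id)) ->
       ~ same_bump (mf_f (nth i L mf_id)) u v (mf_f (nth j L mf_id)) u' v') /\
  (forall F G, In F L -> In G L ->
     forall u v s u' v' s', In (u, v, s) (mf_m F) -> In (u', v', s') (mf_m G) ->
       ~ same_bump (mf_f F) u v (mf_f G) u' v' ->
       disjoint (lfoot u s) (lfoot u' s') /\
       disjoint (lfoot u s) (rfoot (mf_f G) u' v' s') /\
       disjoint (rfoot (mf_f F) u v s) (lfoot u' s') /\
       disjoint (rfoot (mf_f F) u v s) (rfoot (mf_f G) u' v' s')).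

Definition is_interval (E : R -> Prop) : Prop :=
  forall x y z, E x -> E z -> x <= y <= z -> E y.

Definition standard (F : MF) : Prop :=
  marked F /\
  (exists x, ext_supp (mf_f F) x) /\ is_interval (ext_supp (mf_f F)) /\
  (forall u v s u' v' s', In (u, v, s) (mf_m F) -> In (u', v', s') (mf_m F) ->
     neg_on (mf_f F) u v -> pos_on (mf_f F) u' v' -> v <= u') /\
  (exists P N, Permutation (mf_m F) (N ++ P) /\
     Forall (fun b : R * R * R => let '(u, v, _) := b in pos_on (mf_f F) u v) P /\
     Forall (fun b : R * R * R => let '(u, v, _) := b in neg_on (mf_f F) u v) N /\
     (length P = length N \/ length P = S (length N))).

Definition ll (F G : MF) : Prop :=
  forall x y, ext_supp (mf_f F) x -> ext_supp (mf_f G) y -> x < y.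
Definition sqsub (F G : MF) : Prop :=
  forall x, closure (ext_supp (mf_f F)) x -> ext_supp (mf_f G) x.
Definition slt (F G : MF) : Prop := ll F G \/ sqsub F G.

(* circ F H : H is (a choice of) F^circ *)
Definition circ (F H : MF) : Prop :=
  ( (2 < length (mf_m F))%nat /\
    exists ul vl sl ur vr sr,
      In (ul, vl, sl) (mf_m F) /\ In (ur, vr, sr) (mf_m F) /\
      (forall u v s, In (u, v, s) (mf_m F) -> ul <= u /\ v <= vr) /\
      Permutation (mf_m F) ((ul, vl, sl) :: (ur, vr, sr) :: mf_m H) /\
      (forall t, (exists u v s, In (u, v, s) (mf_m H) /\ u < t < v) ->
                 mf_f H t = mf_f F t) /\
      (forall t, ~ (exists u v s, In (u, v, s) (mf_m H) /\ u < t < v) ->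
                 mf_f H t = t) )
  \/
  ( (length (mf_m F) = 1 \/ length (mf_m F) = 2)%nat /\
    exists u v s, In (u, v, s) (mf_m F) /\ pos_on (mf_f F) u v /\
      marked H /\ (exists s', mf_m H = [(u, s, s')]) /\ pos_on (mf_f H) u s ).

Inductive std_pair : MF -> MF -> Prop :=
| sp_ll F G : fast [F; G] -> ll F G -> std_pair F G
| sp_sq F G H : fast [F; G] -> sqsub F G -> circ G H -> std_pair H F ->
                std_pair F G.

Inductive count_P {A : Type} (P : A -> Prop) : list A -> nat -> Prop :=
| cP_nil : count_P P [] 0
| cP_yes x l n : P x -> count_P P l n -> count_P P (x :: l) (S n)
| cP_no x l n : ~ P x -> count_P P l n -> count_P P (x :: l) n.

Definition contains_tp (F : MF) (b : R * R * R) : Prop :=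
  let '(u, v, _) := b in
  exists u' v' s', In (u', v', s') (mf_m F) /\ ((u < u' < v) \/ (u < v' < v)).

Close Scope R_scope.

(* A signature on a finite linear order of size sz, identified with
   {0 < 1 < ... < sz-1}; only values sv i j with i < j < sz matter. *)
Record sig := mkSig { sz : nat; sv : nat -> nat -> nat }.

Definition sig_equiv (A B : sig) : Prop :=
  sz A = sz B /\ forall i j, i < j -> j < sz A -> sv A i j = sv B i j.

(* A is (equivalent to) the signature of a member of calS *)
Definition inS (A : sig) : Prop :=
  exists L : list MF,
    length L = sz A /\
    (forall F, In F L -> standard F) /\
    (forall i j, i < j -> j < sz A -> slt (nth i L mf_id) (nth j L mf_id)) /\
    (forall i j, i < sz A -> j < sz A -> i <> j ->
       slt (nth i L mf_id) (nth j L mf_id) ->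
       std_pair (nth i L mf_id) (nth j L mf_id)) /\
    (forall i j, i < j -> j < sz A ->
       count_P (contains_tp (nth i L mf_id)) (mf_m (nth j L mf_id)) (sv A i j)).

Definition szero : sig := mkSig 0 (fun _ _ => 0).

Definition splus (A B : sig) : sig :=
  mkSig (sz A + sz B) (fun i j =>
    if j <? sz A then sv A i j
    else if sz A <=? i then sv B (i - sz A) (j - sz A) else 0).

Definition sexp (A : sig) : sig := mkSig (sz A) (fun i j => S (sv A i j)).

(* sstar A C  =  A * exp(C) *)
Definition sstar (A C : sig) : sig :=
  mkSig (sz A + sz C) (fun i j =>
    if j <? sz A then sv A i j
    else if sz A <=? i then S (sv C (i - sz A) (j - sz A)) else 1).

(* inflation: base elements are labelled Old k (k in A) or New i (= i^m) *)
Inductive lab := Old (k : nat) | New (i : nat).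

Definition infl_list (A : sig) (m : nat) : list lab :=
  map Old (seq 0 m) ++
  map New (filter (fun i => 0 <? sv A i m) (seq 0 m)) ++
  map Old (seq m (sz A - m)).

Definition infl_val (A : sig) (m : nat) (x y : lab) : nat :=
  match x, y with
  | New i, New j => sv A i j
  | Old i, New j => Nat.min (sv A j m - 1) (sv A i m)
  | New i, Old k => if k =? m then sv A i m (* A(m,m) = infinity *)
                    else Nat.min (sv A i m) (sv A m k)
  | Old i, Old k => sv A i k
  end.

Definition inflate (A : sig) (m : nat) : sig :=
  mkSig (length (infl_list A m)) (fun i j =>
    infl_val A m (nth i (infl_list A m) (Old 0)) (nth j (infl_list A m) (Old 0))).

(* restriction to the subset of the base listed increasingly by s *)
Definition incr_in (s : list nat) (n : nat) : Prop :=
  (forall i j, i < j -> j < length s -> nth i s 0 < nth j s 0) /\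
  (forall x, In x s -> x < n).

Definition restrict (A : sig) (s : list nat) : sig :=
  mkSig (length s) (fun i j => sv A (nth i s 0) (nth j s 0)).

Definition sstep (B B' : sig) : Prop :=
  exists m s, m < sz B /\ incr_in s (sz (inflate B m)) /\
              sig_equiv B' (restrict (inflate B m) s).

Inductive sle : sig -> sig -> Prop :=
| sle_base A B : sig_equiv A B -> sle A B
| sle_step A B B' : sstep B B' -> sle A B' -> sle A B.

(* Let Y = exp((A+B)*exp(C)) and let m be the first element of B (it exists
   since B <> 0).  All values of an exponential are positive, so inflating Y at
   m creates a copy i^m of every element i of A.  Keep the copies together
   with B and C.  Among themselves the copies keep the values of exp(A), and
   against m or any later k they get Y(i,m) = 1 or min(Y(i,m), Y(m,k)) = 1,
   which is exactly the value exp(A + B*exp(C)) takes across A and B*exp(C). *)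

From Stdlib Require Import Reals List Arith Permutation Lia.

Ltac case_nat_tests :=
  repeat match goal with
  | |- context [?x <? ?y] => destruct (Nat.ltb_spec x y)
  | |- context [?x <=? ?y] => destruct (Nat.leb_spec x y)
  | |- context [?x =? ?y] => destruct (Nat.eqb_spec x y)
  end.

Lemma sig_equiv_refl (A : sig) : sig_equiv A A.
Proof. split; reflexivity. Qed.

Lemma nth_map_seq {X : Type} (f : nat -> X) (s n i : nat) (d : X) :
  i < n -> nth i (map f (seq s n)) d = f (s + i).
Proof.
  intro Hi.
  rewrite (nth_indep _ d (f 0)) by (rewrite length_map, length_seq; exact Hi).
  now rewrite map_nth, seq_nth.
Qed.

Lemma filter_seq_all (f : nat -> bool) (s n : nat) :
  (forall x, s <= x < s + n -> f x = true) -> filter f (seq s n) = seq s n.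
Proof.
  revert s; induction n as [|n IH]; intros s Hf; simpl; [reflexivity|].
  rewrite Hf by lia. f_equal. apply IH. intros x Hx. apply Hf. lia.
Qed.

Section InflationWithAllCopies.

Variables (A : sig) (m : nat).
Hypothesis m_le : m <= sz A.
Hypothesis pos_below : forall i, i < m -> 0 < sv A i m.

Lemma infl_list_all_copies :
  infl_list A m = map Old (seq 0 m) ++ map New (seq 0 m) ++ map Old (seq m (sz A - m)).
Proof.
  unfold infl_list. rewrite filter_seq_all; [reflexivity|].
  intros x Hx. apply Nat.ltb_lt, pos_below. lia.
Qed.

Lemma length_infl_list_all_copies : length (infl_list A m) = m + sz A.
Proof.
  rewrite infl_list_all_copies, !length_app, !length_map, !length_seq. lia.
Qed.

(* Dropping the first m entries of the inflation re-indexes the copy i^m as i. *)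
Lemma nth_infl_list_shift (i : nat) :
  i < sz A -> nth (m + i) (infl_list A m) (Old 0) = if i <? m then New i else Old i.
Proof.
  intro Hi. rewrite infl_list_all_copies.
  rewrite app_nth2, length_map, length_seq by (rewrite length_map, length_seq; lia).
  destruct (Nat.ltb_spec i m).
  - rewrite app_nth1 by (rewrite length_map, length_seq; lia).
    rewrite nth_map_seq by lia. f_equal. lia.
  - rewrite app_nth2, length_map, length_seq by (rewrite length_map, length_seq; lia).
    rewrite nth_map_seq by lia. f_equal. lia.
Qed.

End InflationWithAllCopies.

(* The elements below m replaced by their copies i^m in the inflation at m. *)
Definition copy_below (A : sig) (m : nat) : sig :=
  mkSig (sz A) (fun i j =>
    if m <=? i then sv A i j
    else if j <? m then sv A i j
    else if j =? m then sv A i j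
    else Nat.min (sv A i m) (sv A m j)).

Lemma sle_copy_below (A X : sig) (m : nat) :
  m < sz A -> (forall i, i < m -> 0 < sv A i m) ->
  sig_equiv X (copy_below A m) -> sle X A.
Proof.
  intros Hm Hpos [Hsz Hval].
  apply sle_step with (B' := X); [|apply sle_base, sig_equiv_refl].
  exists m, (seq m (sz A)). split; [exact Hm|split; [split|]].
  - intros i j Hij Hj. rewrite length_seq in Hj. rewrite !seq_nth by lia. lia.
  - intros x Hx. apply in_seq in Hx. simpl.
    rewrite length_infl_list_all_copies by (lia || exact Hpos). lia.
  - split; [simpl; rewrite length_seq; exact Hsz|].
    intros i j Hij Hj. rewrite Hval by assumption. simpl in *.
    rewrite !seq_nth, !nth_infl_list_shift by (lia || exact Hpos).
    unfold infl_val. case_nat_tests; subst; reflexivity || lia.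
Qed.

Lemma sexp_splus_sstar_copy_below (A B C : sig) :
  sz B <> 0 ->
  sig_equiv (sexp (splus A (sstar B C)))
            (copy_below (sexp (sstar (splus A B) C)) (sz A)).
Proof.
  intro HB. split; [simpl; lia|].
  intros i j Hij Hj. simpl in *.
  case_nat_tests; subst; try lia; rewrite ?Nat.sub_add_distr; reflexivity.
Qed.

Theorem lemma8p9 (A B C : sig) :
  inS A -> inS B -> inS C -> sz B <> 0 -> sz C <> 0 ->
  sle (sexp (splus A (sstar B C))) (sexp (sstar (splus A B) C)).
Proof.
  intros _ _ _ HB _.
  apply sle_copy_below with (m := sz A).
  - simpl. lia.
  - intros i _. apply Nat.lt_0_succ.
  - apply sexp_splus_sstar_copy_below, HB.
Qed.
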